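(* Let $F$ be any one of the six faces of the cube $\widehat{\mathbf K}=[-1,1]^3$, let $V_1^F,\dots,V_4^F$ be its four vertices and $M^F$ its centroid. If $p\in\widehat{\mathbb P}^{(1)}_{SK}$ satisfies $p(V_j^F)=0$ for $j=1,2,3,4$ and $p(M^F)=0$, then $\int_F p\,ds=0$.
   Context: Coordinates on $\mathbb R^3$ are $(x_1,x_2,x_3)$; $P_2$ denotes polynomials of total degree at most $2$. The Type 1 Smith–Kidger space is $\widehat{\mathbb P}^{(1)}_{SK}=P_2\oplus\mathrm{Span}\{x_1x_2x_3,\ x_1^2x_2,\ x_2^2x_3,\ x_3^2x_1\}$, considered on $\widehat{\mathbf K}=[-1,1]^3$. *)

From Stdlib Require Import Reals.
From Coquelicot Require Import Coquelicot.
Open Scope R_scope.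

Definition pt3 := (R * R * R)%type.

(* A general element of the Type 1 Smith--Kidger space
   P_2 (+) span{x1 x2 x3, x1^2 x2, x2^2 x3, x3^2 x1},
   with coefficient vector c (indices 0..13). *)
Definition sk1_eval (c : nat -> R) (x : pt3) : R :=
  let '(x1, x2, x3) := x in
    c 0%nat
  + c 1%nat * x1 + c 2%nat * x2 + c 3%nat * x3
  + c 4%nat * x1 ^ 2 + c 5%nat * x2 ^ 2 + c 6%nat * x3 ^ 2
  + c 7%nat * (x1 * x2) + c 8%nat * (x1 * x3) + c 9%nat * (x2 * x3)
  + c 10%nat * (x1 * x2 * x3)
  + c 11%nat * (x1 ^ 2 * x2)
  + c 12%nat * (x2 ^ 2 * x3)
  + c 13%nat * (x3 ^ 2 * x1).

Definition in_SK1 (p : pt3 -> R) : Prop :=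
  exists c : nat -> R, forall x : pt3, p x = sk1_eval c x.

(* Faces of [-1,1]^3: the coordinate axis fixed, and its sign. *)
Inductive axis := Ax1 | Ax2 | Ax3.

Definition sgn (b : bool) : R := if b then 1 else -1.

(* Parametrization of the face {x_a = sgn s} by (u, v) in [-1,1]^2
   (an isometry onto the face, so ds = du dv). *)
Definition face_pt (a : axis) (s : bool) (u v : R) : pt3 :=
  match a with
  | Ax1 => (sgn s, u, v)
  | Ax2 => (u, sgn s, v)
  | Ax3 => (u, v, sgn s)
  end.

Definition face_vertex (a : axis) (s e1 e2 : bool) : pt3 :=
  face_pt a s (sgn e1) (sgn e2).

Definition face_centroid (a : axis) (s : bool) : pt3 := face_pt a s 0 0.

Definition face_integral (a : axis) (s : bool) (f : pt3 -> R) : R :=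
  RInt (fun v => RInt (fun u => f (face_pt a s u v)) (-1) 1) (-1) 1.

(* Restricted to a face, every member of the Smith--Kidger space is a
   serendipity polynomial of degree 2 in the face coordinates (u, v), i.e. a
   combination of 1, u, v, u^2, v^2, uv, u^2 v, u v^2: the cubic monomials of
   the space each contain at most two free variables, one of them squared.
   On [-1,1]^2 the cubature rule "1/3 at each vertex, 8/3 at the centre" is
   exact for this space, so the integral vanishes with the five values. *)
From Stdlib Require Import Reals.
From Coquelicot Require Import Coquelicot.
Open Scope R_scope.

Lemma RInt_quadratic_sym (a b c : R) :
  RInt (fun u => a + b * u + c * u ^ 2) (-1) 1 = 2 * a + 2 / 3 * c.
Proof.
  apply is_RInt_unique.
  set (F := fun u => a * u + b * u ^ 2 / 2 + c * u ^ 3 / 3).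
  replace (2 * a + 2 / 3 * c) with (minus (F 1) (F (-1)))
    by (unfold minus, plus, opp, F; simpl; field).
  apply (is_RInt_derive F).
  - intros x _; unfold F; auto_derive; [exact I | field].
  - intros x _; apply (ex_derive_continuous (V := R_NormedModule)).
    unfold F; auto_derive; exact I.
Qed.

Definition square_integral (f : R -> R -> R) : R :=
  RInt (fun v => RInt (fun u => f u v) (-1) 1) (-1) 1.

Definition serendipity2 (f : R -> R -> R) : Prop :=
  exists k0 k1 k2 k3 k4 k5 k6 k7 : R, forall u v : R,
    f u v = k0 + k1 * u + k2 * v + k3 * u ^ 2 + k4 * v ^ 2 + k5 * (u * v)
            + k6 * (u ^ 2 * v) + k7 * (u * v ^ 2).

Lemma square_integral_serendipity2 (f : R -> R -> R) :
  serendipity2 f ->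
  square_integral f
  = (f 1 1 + f 1 (-1) + f (-1) 1 + f (-1) (-1)) / 3 + 8 / 3 * f 0 0.
Proof.
  intros (k0 & k1 & k2 & k3 & k4 & k5 & k6 & k7 & Hf).
  unfold square_integral.
  rewrite (RInt_ext _ (fun v => (2 * k0 + 2 / 3 * k3) + (2 * k2 + 2 / 3 * k6) * v
                                 + (2 * k4) * v ^ 2)).
  - rewrite RInt_quadratic_sym, !Hf; field.
  - intros v _.
    rewrite (RInt_ext _ (fun u => (k0 + k2 * v + k4 * v ^ 2)
                                  + (k1 + k5 * v + k7 * v ^ 2) * u
                                  + (k3 + k6 * v) * u ^ 2)).
    + rewrite RInt_quadratic_sym; simpl; ring.
    + intros u _; rewrite Hf; simpl; ring.
Qed.

Lemma SK1_face_serendipity2 (a : axis) (s : bool) (p : pt3 -> R) :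
  in_SK1 p -> serendipity2 (fun u v => p (face_pt a s u v)).
Proof.
  intros [c Hc]; set (σ := sgn s).
  destruct a.
  - exists (c 0%nat + c 1%nat * σ + c 4%nat * σ ^ 2),
      (c 2%nat + c 7%nat * σ + c 11%nat * σ ^ 2), (c 3%nat + c 8%nat * σ),
      (c 5%nat), (c 6%nat + c 13%nat * σ), (c 9%nat + c 10%nat * σ), (c 12%nat), 0.
    intros u v; rewrite Hc; unfold sk1_eval, face_pt; fold σ; ring.
  - exists (c 0%nat + c 2%nat * σ + c 5%nat * σ ^ 2),
      (c 1%nat + c 7%nat * σ), (c 3%nat + c 9%nat * σ + c 12%nat * σ ^ 2),
      (c 4%nat + c 11%nat * σ), (c 6%nat), (c 8%nat + c 10%nat * σ), 0, (c 13%nat).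
    intros u v; rewrite Hc; unfold sk1_eval, face_pt; fold σ; ring.
  - exists (c 0%nat + c 3%nat * σ + c 6%nat * σ ^ 2),
      (c 1%nat + c 8%nat * σ + c 13%nat * σ ^ 2), (c 2%nat + c 9%nat * σ),
      (c 4%nat), (c 5%nat + c 12%nat * σ), (c 7%nat + c 10%nat * σ), (c 11%nat), 0.
    intros u v; rewrite Hc; unfold sk1_eval, face_pt; fold σ; ring.
Qed.

Theorem lemma2 (a : axis) (s : bool) (p : pt3 -> R) :
  in_SK1 p ->
  (forall e1 e2 : bool, p (face_vertex a s e1 e2) = 0) ->
  p (face_centroid a s) = 0 ->
  face_integral a s p = 0.
Proof.
  intros Hp Hv Hc.
  change (square_integral (fun u v => p (face_pt a s u v)) = 0).
  rewrite square_integral_serendipity2 by exact (SK1_face_serendipity2 a s p Hp).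
  rewrite (Hv true true : p (face_pt a s 1 1) = 0),
          (Hv true false : p (face_pt a s 1 (-1)) = 0),
          (Hv false true : p (face_pt a s (-1) 1) = 0),
          (Hv false false : p (face_pt a s (-1) (-1)) = 0),
          (Hc : p (face_pt a s 0 0) = 0).
  field.
Qed.
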